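(* Suppose that \begin{itemize} \item $X$ is geodetic; and \item either \begin{itemize} \item $X$ is Menger convex and has no 4-cuts, or \item $X$ is geodesic. \end{itemize} \end{itemize} Then $\mathit{HM}_2(X)=0$.
   Context: Let $X$ be a metric space. Write $y$ is between $x$ and $z$ if $d(x,y)+d(y,z)=d(x,z)$, and strictly between if moreover $x\neq y\neq z$. $X$ is Menger convex if for any two distinct points there is a point strictly between them. $X$ has no 4-cuts if whenever $y_1\neq y_2$, $d(x,y_1)+d(y_1,y_2)=d(x,y_2)$ and $d(y_1,y_2)+d(y_2,z)=d(y_1,z)$ imply $d(x,z)=d(x,y_1)+d(y_1,y_2)+d(y_2,z)$. $X$ is geodesic if for any $x,y$ there is an isometry $\gamma:[0,a]\to X$ with $\gamma(0)=x$, $\gamma(a)=y$. $X$ is geodetic if for any distinct $x,z$, whenever $y_1$ and $y_2$ are both between $x$ and $z$, either ($y_1$ is between $x$ and $y_2$ and $y_2$ is between $y_1$ and $z$) or ($y_2$ is between $x$ and $y_1$ and $y_1$ is between $y_2$ and $z$). The magnitude homology $\mathit{HM}^\ell_n(X)$ is the degree-$n$ homology of the chain complex whose $n$-chains in grading $\ell$ are the free abelian group on symbols $\langle x_0,\dots,x_n\rangle$ with $x_i\neq x_{i+1}$ and $d(x_0,x_1)+\cdots+d(x_{n-1},x_n)=\ell$, with boundary $\sum_i(-1)^i d^i$, where $d^i$ deletes $x_i$ if $x_i$ is between $x_{i-1}$ and $x_{i+1}$ and is $0$ otherwise (deleting an endpoint always gives $0$); $\mathit{HM}_2(X)=0$ means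 vanishing in all gradings. *)

From Stdlib Require Import Reals List ZArith ClassicalEpsilon.
Import ListNotations.
Open Scope R_scope.

Section Metric.
Context {X : Type} (d : X -> X -> R).

Definition is_metric : Prop :=
  (forall x y, d x y = 0 <-> x = y) /\
  (forall x y, d x y = d y x) /\
  (forall x y z, d x z <= d x y + d y z).

Definition between (x y z : X) : Prop := d x y + d y z = d x z.

Definition strictly_between (x y z : X) : Prop :=
  between x y z /\ x <> y /\ y <> z.

Definition menger_convex : Prop :=
  forall x z, x <> z -> exists y, strictly_between x y z.

Definition no_4_cuts : Prop :=
  forall x y1 y2 z, y1 <> y2 ->
    d x y1 + d y1 y2 = d x y2 ->
    d y1 y2 + d y2 z = d y1 z ->
    d x z = d x y1 + d y1 y2 + d y2 z.

Definition geodesic : Prop :=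
  forall x y, exists (a : R) (g : R -> X),
    0 <= a /\ g 0 = x /\ g a = y /\
    forall s t, 0 <= s <= a -> 0 <= t <= a -> d (g s) (g t) = Rabs (s - t).

Definition geodetic : Prop :=
  forall x z y1 y2, x <> z -> between x y1 z -> between x y2 z ->
    (between x y1 y2 /\ between y1 y2 z) \/
    (between x y2 y1 /\ between y2 y1 z).

(** Generators: tuples <x_0,...,x_n> represented as lists. *)
Fixpoint consec_distinct (xs : list X) : Prop :=
  match xs with
  | x :: ((y :: _) as tl) => x <> y /\ consec_distinct tl
  | _ => True
  end.

Fixpoint path_length (xs : list X) : R :=
  match xs with
  | x :: ((y :: _) as tl) => d x y + path_length tl
  | _ => 0
  end.

Definition is_gen (n : nat) (l : R) (xs : list X) : Prop :=
  length xs = S n /\ consec_distinct xs /\ path_length xs = l.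

(** Chains: finite formal Z-linear combinations of tuples. *)
Definition chain := list (Z * list X).

Definition coef (c : chain) (t : list X) : Z :=
  fold_right (fun e acc =>
    if excluded_middle_informative (snd e = t) then (fst e + acc)%Z else acc)
    0%Z c.

Fixpoint remove_nth (i : nat) (xs : list X) : list X :=
  match i, xs with
  | _, [] => []
  | O, _ :: tl => tl
  | S i', x :: tl => x :: remove_nth i' tl
  end.

(** The face map d^i: deletes x_i if it is between x_{i-1} and x_{i+1},
    zero otherwise (in particular for the endpoints i = 0, i = n). *)
Definition face (i : nat) (xs : list X) : option (list X) :=
  match i with
  | O => None
  | S i' =>
    match nth_error xs i', nth_error xs i, nth_error xs (S i) with
    | Some a, Some b, Some c =>
        if Req_EM_T (d a b + d b c) (d a c) then Some (remove_nth i xs) else None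
    | _, _, _ => None
    end
  end.

Definition sign (i : nat) : Z := if Nat.even i then 1%Z else (-1)%Z.

Definition bd_gen (k : Z) (xs : list X) : chain :=
  flat_map (fun i =>
    match face i xs with
    | Some ys => [((sign i * k)%Z, ys)]
    | None => []
    end) (seq 0 (length xs)).

Definition bd (c : chain) : chain :=
  flat_map (fun e => bd_gen (fst e) (snd e)) c.

Definition chain_in (n : nat) (l : R) (c : chain) : Prop :=
  forall e, In e c -> is_gen n l (snd e).

Definition HM_vanishes_at (n : nat) (l : R) : Prop :=
  forall c : chain, chain_in n l c ->
    (forall t, coef (bd c) t = 0%Z) ->
    exists b : chain, chain_in (S n) l b /\
      (forall t, coef (bd b) t = coef c t).

Definition HM_vanishes (n : nat) : Prop := forall l : R, HM_vanishes_at n l.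

End Metric.

(* For a <> c with something strictly between them, fix such a point r(a,c)
   depending only on a and c, and let tau be the linear map sending <a,c> to
   <a,r(a,c),c>.  A 2-cycle is filled one generator at a time.  If x1 is
   between x0 and x2, geodeticity puts x1 and r = r(x0,x2) in a common geodesic
   order, so one of the 3-simplices <x0,x1,r,x2>, <x0,r,x1,x2> has boundary
   +-(<x0,x1,x2> - <x0,r,x2>).  If x1 is not between x0 and x2, Menger
   convexity without 4-cuts (or a geodesic from x0 to x1) gives m strictly
   between x0 and x1 with x1 still not between m and x2, and <x0,m,x1,x2> has
   boundary -<x0,x1,x2>.  The resulting filler F satisfies dF(c) = c + tau(dc),
   hence dF(c) = c on cycles. *)

From Stdlib Require Import Reals Lra Lia List ZArith ClassicalEpsilon.
Import ListNotations.
Open Scope R_scope.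

Section Chains.
Context {X : Type}.

Lemma coef_cons (e : Z * list X) (c : chain) (t : list X) :
  coef (e :: c) t = (coef [e] t + coef c t)%Z.
Proof. unfold coef; simpl; destruct (excluded_middle_informative _); lia. Qed.

Lemma coef_app (c1 c2 : chain) (t : list X) :
  coef (c1 ++ c2) t = (coef c1 t + coef c2 t)%Z.
Proof.
  induction c1 as [|e c1 IH]; [reflexivity|].
  rewrite <- app_comm_cons, coef_cons, IH, (coef_cons e c1). lia.
Qed.

End Chains.

Ltac coef_compute :=
  unfold coef; simpl;
  repeat destruct (excluded_middle_informative _); subst; try congruence; lia.

Section Metric.
Context {X : Type} (d : X -> X -> R).
Hypothesis metric : is_metric d.

Lemma dist_self (x : X) : d x x = 0.
Proof. apply (proj1 metric); reflexivity. Qed.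

Lemma dist_pos (x y : X) : x <> y -> 0 < d x y.
Proof.
  destruct metric as [Hzero [Hsym Htri]]; intros Hxy.
  pose proof (Htri x y x) as Hxyx; rewrite (Hsym y x), dist_self in Hxyx.
  destruct (Req_dec (d x y) 0) as [E|E]; [apply Hzero in E; contradiction|lra].
Qed.

Lemma between_neq_ends (x y z : X) : x <> y -> between d x y z -> x <> z.
Proof.
  unfold between; intros Hxy Hb ->.
  pose proof (dist_pos _ _ Hxy); pose proof (dist_pos _ _ (not_eq_sym Hxy)).
  rewrite dist_self in Hb; lra.
Qed.

Lemma nonbetween_neq (a b c : X) : ~ between d a b c -> a <> b.
Proof. intros Hn ->; apply Hn; unfold between; rewrite dist_self; lra. Qed.

End Metric.

Section Splitting.
Context {X : Type} (d : X -> X -> R).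

Definition nonbetween_splittable : Prop :=
  forall a b c, ~ between d a b c ->
    exists m, strictly_between d a m b /\ ~ between d m b c.

Lemma menger_no_4_cuts_splittable :
  is_metric d -> menger_convex d -> no_4_cuts d -> nonbetween_splittable.
Proof.
  intros Hm Hmenger Hcuts a b c Hn.
  destruct (Hmenger a b (nonbetween_neq d Hm a b c Hn)) as [m [Bm [Ham Hmb]]].
  exists m; repeat split; auto.
  intro Hb; apply Hn; unfold between in *.
  pose proof (Hcuts a m b c Hmb Bm Hb); lra.
Qed.

Lemma geodesic_splittable : is_metric d -> geodesic d -> nonbetween_splittable.
Proof.
  intros Hm Hgeo a b c Hn.
  pose proof Hm as [_ [Hsym Htri]].
  destruct (Hgeo a b) as [len [g [Hlen [Hg0 [Hglen Hiso]]]]].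
  assert (Hab : d a b = len).
  { rewrite <- Hg0, <- Hglen, Hiso by lra; rewrite Rabs_left1; lra. }
  pose proof (dist_pos d Hm a b (nonbetween_neq d Hm a b c Hn)).
  pose proof (Htri a b c); unfold between in Hn.
  set (excess := d a b + d b c - d a c).
  (* for m at distance t from a on [a,b]: d(m,c) <= t + d(a,c) < d(m,b) + d(b,c) *)
  set (t := Rmin (excess / 3) (len / 2)).
  assert (Ht : 0 < t <= excess / 3 /\ t <= len / 2).
  { unfold t, excess; repeat split; [apply Rmin_glb_lt; lra|apply Rmin_l|apply Rmin_r]. }
  assert (Ham : d a (g t) = t).
  { rewrite <- Hg0, Hiso by lra; rewrite Rabs_left; lra. }
  assert (Hmb : d (g t) b = len - t).
  { rewrite <- Hglen, Hiso by lra; rewrite Rabs_left; lra. }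
  exists (g t); repeat split; unfold between.
  - lra.
  - intros E; rewrite <- E, dist_self in Ham by exact Hm; lra.
  - intros E; rewrite E, dist_self in Hmb by exact Hm; lra.
  - pose proof (Htri (g t) a c); rewrite (Hsym (g t) a) in *; unfold excess in *; lra.
Qed.

End Splitting.

Section Filler.
Context {X : Type} (d : X -> X -> R).

(* Chosen by epsilon, so r(a,c) depends on the endpoints only; it is a junk
   point when nothing lies strictly between a and c. *)
Definition interior_point (a c : X) : X :=
  epsilon (inhabits a) (fun y => strictly_between d a y c).

Definition split_point (a b c : X) : X :=
  epsilon (inhabits a) (fun m => strictly_between d a m b /\ ~ between d m b c).

Definition cone_gen (e : Z * list X) : chain :=
  match e with
  | (k, [a; c]) => [(k, [a; interior_point a c; c])]
  | _ => []
  end.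

Definition cone : chain -> chain := flat_map cone_gen.

Lemma cone_app (c1 c2 : chain) : cone (c1 ++ c2) = cone c1 ++ cone c2.
Proof. apply flat_map_app. Qed.

Lemma coef_cone_apex (ch : chain) (a c : X) :
  coef (cone ch) [a; interior_point a c; c] = coef ch [a; c].
Proof.
  induction ch as [|[k s] ch IH]; [reflexivity|].
  change ((k, s) :: ch) with ([(k, s)] ++ ch).
  rewrite cone_app, !coef_app, IH; f_equal.
  destruct s as [|x [|y [|z s]]]; coef_compute.
Qed.

Lemma coef_cone_off (ch : chain) (t : list X) :
  (forall a c, t <> [a; interior_point a c; c]) -> coef (cone ch) t = 0%Z.
Proof.
  intros Hoff; induction ch as [|[k s] ch IH]; [reflexivity|].
  change ((k, s) :: ch) with ([(k, s)] ++ ch).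
  rewrite cone_app, coef_app, IH.
  destruct s as [|x [|y [|z s]]]; coef_compute.
Qed.

Lemma cone_vanishes (ch : chain) :
  (forall s, coef ch s = 0%Z) -> forall t, coef (cone ch) t = 0%Z.
Proof.
  intros Hch t.
  destruct (classic (exists a c, t = [a; interior_point a c; c])) as [[a [c ->]]|Hoff].
  - rewrite coef_cone_apex; apply Hch.
  - apply coef_cone_off; intros a c E; apply Hoff; eauto.
Qed.

Lemma bd_app (c1 c2 : chain) : bd d (c1 ++ c2) = bd d c1 ++ bd d c2.
Proof. apply flat_map_app. Qed.

Lemma bd_gen3_between (k : Z) (a b c : X) :
  between d a b c -> bd_gen d k [a; b; c] = [((- k)%Z, [a; c])].
Proof.
  unfold bd_gen, between; simpl; intros Habc.
  destruct (Req_EM_T _ _); try contradiction; destruct k; reflexivity.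
Qed.

Lemma bd_gen3_nonbetween (k : Z) (a b c : X) :
  ~ between d a b c -> bd_gen d k [a; b; c] = [].
Proof.
  unfold bd_gen, between; simpl; intros Habc.
  destruct (Req_EM_T _ _); [contradiction|reflexivity].
Qed.

Lemma bd_gen4_geodesic (k : Z) (a b c e : X) :
  between d a b c -> between d b c e ->
  bd_gen d k [a; b; c; e] = [((- k)%Z, [a; c; e]); (k, [a; b; e])].
Proof.
  unfold bd_gen, between; simpl; intros Habc Hbce.
  destruct (Req_EM_T _ _), (Req_EM_T _ _); try contradiction; destruct k; reflexivity.
Qed.

Lemma bd_gen4_split (k : Z) (a b c e : X) :
  between d a b c -> ~ between d b c e ->
  bd_gen d k [a; b; c; e] = [((- k)%Z, [a; c; e])].
Proof.
  unfold bd_gen, between; simpl; intros Habc Hbce.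
  destruct (Req_EM_T _ _), (Req_EM_T _ _); try contradiction; destruct k; reflexivity.
Qed.

Definition filler_gen (e : Z * list X) : chain :=
  match e with
  | (k, [x0; x1; x2]) =>
    let r := interior_point x0 x2 in
    if excluded_middle_informative (between d x0 x1 x2) then
      if excluded_middle_informative (x1 = r) then []
      else if excluded_middle_informative (between d x0 x1 r /\ between d x1 r x2)
      then [(k, [x0; x1; r; x2])]
      else [((- k)%Z, [x0; r; x1; x2])]
    else [((- k)%Z, [x0; split_point x0 x1 x2; x1; x2])]
  | _ => []
  end.

Definition filler : chain -> chain := flat_map filler_gen.

Lemma filler_app (c1 c2 : chain) : filler (c1 ++ c2) = filler c1 ++ filler c2.
Proof. apply flat_map_app. Qed.

Lemma chain_in_app (n : nat) (l : R) (c1 c2 : chain) :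
  chain_in d n l c1 -> chain_in d n l c2 -> chain_in d n l (c1 ++ c2).
Proof. intros H1 H2 e He; apply in_app_or in He as [He|He]; auto. Qed.

Hypothesis metric : is_metric d.
Hypothesis geodetic_d : geodetic d.
Hypothesis splittable : nonbetween_splittable d.

Lemma filler_gen_spec (l : R) (e : Z * list X) :
  is_gen d 2 l (snd e) ->
  chain_in d 3 l (filler [e]) /\
  forall t, coef (bd d (filler [e])) t = (coef [e] t + coef (cone (bd d [e])) t)%Z.
Proof.
  destruct e as [k [|x0 [|x1 [|x2 [|]]]]];
    intros [Hlen [Hdist Hpath]]; simpl in Hlen; try discriminate.
  destruct Hdist as [H01 [H12 _]]; simpl in Hpath.
  unfold filler, filler_gen, chain_in, is_gen, bd; cbn [flat_map fst snd]; rewrite !app_nil_r.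
  destruct (excluded_middle_informative (between d x0 x1 x2)) as [B|NB].
  - assert (Hr : strictly_between d x0 (interior_point x0 x2) x2).
    { unfold interior_point; apply epsilon_spec; exists x1; repeat split; assumption. }
    set (r := interior_point x0 x2) in *; destruct Hr as [Br [H0r Hr2]].
    rewrite bd_gen3_between by assumption.
    destruct (excluded_middle_informative (x1 = r)) as [->|Hx1r].
    { split; [intros _ []|intros t; coef_compute]. }
    destruct (excluded_middle_informative (between d x0 x1 r /\ between d x1 r x2))
      as [[B1 B2]|Border].
    + cbn [flat_map fst snd]; rewrite app_nil_r, bd_gen4_geodesic by assumption.
      split; [intros e [<-|[]]; unfold between in *; simpl; repeat split; auto; lra|].
      intros t; coef_compute.
    + destruct (geodetic_d x0 x2 x1 r (between_neq_ends d metric x0 x1 x2 H01 B) B Br)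
        as [|[B1 B2]]; [contradiction|].
      cbn [flat_map fst snd]; rewrite app_nil_r, bd_gen4_geodesic by assumption.
      split; [intros e [<-|[]]; unfold between in *; simpl; repeat split; auto; lra|].
      intros t; coef_compute.
  - assert (Hm : strictly_between d x0 (split_point x0 x1 x2) x1
                 /\ ~ between d (split_point x0 x1 x2) x1 x2).
    { destruct (splittable x0 x1 x2 NB) as [m Hm].
      unfold split_point; apply epsilon_spec; eauto. }
    set (m := split_point x0 x1 x2) in *; destruct Hm as [[Bm [H0m Hm1]] NBm].
    cbn [flat_map fst snd]; rewrite app_nil_r, bd_gen3_nonbetween, bd_gen4_split by assumption.
    split; [intros e [<-|[]]; unfold between in *; simpl; repeat split; auto; lra|].
    intros t; coef_compute.
Qed.

Lemma filler_chain_in (l : R) (c : chain) : chain_in d 2 l c -> chain_in d 3 l (filler c).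
Proof.
  induction c as [|e c IH]; intros Hc; [intros _ []|].
  change (e :: c) with ([e] ++ c) in *; rewrite filler_app.
  apply chain_in_app.
  - exact (proj1 (filler_gen_spec l e (Hc e (or_introl eq_refl)))).
  - apply IH; intros e' He'; apply Hc, in_or_app; auto.
Qed.

Lemma coef_bd_filler (l : R) (c : chain) :
  chain_in d 2 l c -> forall t, coef (bd d (filler c)) t = (coef c t + coef (cone (bd d c)) t)%Z.
Proof.
  induction c as [|e c IH]; intros Hc t; [reflexivity|].
  change (e :: c) with ([e] ++ c) in *.
  rewrite filler_app, !bd_app, cone_app, !coef_app.
  rewrite (proj2 (filler_gen_spec l e (Hc e (or_introl eq_refl))) t).
  rewrite IH by (intros e' He'; apply Hc, in_or_app; auto).
  lia.
Qed.

End Filler.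

Theorem theorem7p22 (X : Type) (d : X -> X -> R) :
  is_metric d ->
  geodetic d ->
  ((menger_convex d /\ no_4_cuts d) \/ geodesic d) ->
  HM_vanishes d 2.
Proof.
  intros Hm Hg Hconv l c Hc Hcycle.
  assert (Hsplit : nonbetween_splittable d).
  { destruct Hconv as [[Hmenger Hcuts]|Hgeo].
    - exact (menger_no_4_cuts_splittable d Hm Hmenger Hcuts).
    - exact (geodesic_splittable d Hm Hgeo). }
  exists (filler d c); split.
  - exact (filler_chain_in d Hm Hg Hsplit l c Hc).
  - intros t; rewrite (coef_bd_filler d Hm Hg Hsplit l c Hc t), (cone_vanishes d _ Hcycle t).
    lia.
Qed.
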